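(* Let $\mathcal H$ be a family of graphs. The following are equivalent: (i) there is a constant $c=c(\mathcal H)$ such that every (not necessarily connected) $\mathcal H$-free graph $G$ has fewer than $c$ vertices $v$ with $\alpha(G[N(v)])\ge 2$; (ii) there is a positive integer $n$ such that $\mathcal H\le \{K_n^*,\ nP_3,\ K_{1,n}^*,\ K_{2,n},\ E_2+K_n,\ CK_n\}$.
   Context: All graphs are finite, simple, undirected. For graphs $H_1,H_2$, write $H_1\prec H_2$ if $H_2$ contains an induced subgraph isomorphic to $H_1$. A graph $G$ is $\mathcal H$-free if no $H\in\mathcal H$ satisfies $H\prec G$. For families $\mathcal H_1,\mathcal H_2$, write $\mathcal H_1\le\mathcal H_2$ if for every $H_2\in\mathcal H_2$ there is $H_1\in\mathcal H_1$ with $H_1\prec H_2$. $N(v)$ is the neighborhood, $G[S]$ the induced subgraph, $\alpha$ the independence number. $K_n$, $E_n$, $P_n$ are the complete graph, edgeless graph, and path on $n$ vertices; $K_{s,t}$ is the complete bipartite graph; $nG$ is the disjoint union of $n$ copies of $G$; $G_1+G_2$ is the join. $K_{1,n}^*$ is obtained from the star $K_{1,n}$ by attaching a new pendant vertex to each leaf; $K_n^*$ is obtained from $K_n$ by attaching a new pendant vertex to each vertex; $CK_n$ is obtained from two disjoint copies of $K_n$ by adding a perfect matching between them. *)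

From mathcomp Require Import all_boot.
Set Implicit Arguments. Unset Strict Implicit. Unset Printing Implicit Defensive.

(* A finite simple undirected graph: a finite vertex type together with a
   relation [grel]; adjacency is the irreflexive symmetric closure, so every
   value of this type denotes a simple graph. *)
Record graph := Graph { V : finType; grel : rel V }.

Definition adj (G : graph) : rel (V G) :=
  fun x y => (x != y) && (grel x y || grel y x).

Definition induced (H1 H2 : graph) : Prop :=
  exists f : V H1 -> V H2, injective f /\
    forall x y, adj (f x) (f y) = adj x y.

Definition gfamily := graph -> Prop.

Definition Hfree (F : gfamily) (G : graph) : Prop :=
  forall H, F H -> ~ induced H G.

Definition fam_le (F1 F2 : gfamily) : Prop :=
  forall H2, F2 H2 -> exists2 H1, F1 H1 & induced H1 H2.

Definition nbhd (G : graph) (v : V G) : {set V G} := [set u | adj v u].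

Definition indep (G : graph) (A : {set V G}) : bool :=
  [forall x in A, forall y in A, ~~ adj x y].

Definition alpha_on (G : graph) (S : {set V G}) : nat :=
  \max_(A : {set V G} | (A \subset S) && indep A) #|A|.

(* K_n^* : inl i = clique vertex, inr i = its pendant. *)
Definition Kstar (n : nat) : graph :=
  @Graph ('I_n + 'I_n)%type (fun x y =>
    match x, y with
    | inl i, inl j => i != j
    | inl i, inr j => i == j
    | _, _ => false
    end).

(* n P_3 : copy a, position 0-1-2 *)
Definition nP3 (n : nat) : graph :=
  @Graph ('I_n * 'I_3)%type (fun x y =>
    (x.1 == y.1) && (y.2 == x.2.+1 :> nat)).

(* K_{1,n}^* : None = centre, inl i = leaf, inr i = pendant of leaf i. *)
Definition K1nstar (n : nat) : graph :=
  @Graph (option ('I_n + 'I_n))%type (fun x y =>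
    match x, y with
    | None, Some (inl _) => true
    | Some (inl i), Some (inr j) => i == j
    | _, _ => false
    end).

Definition K2n (n : nat) : graph :=
  @Graph ('I_2 + 'I_n)%type (fun x y =>
    match x, y with
    | inl _, inr _ => true
    | _, _ => false
    end).

Definition E2joinKn (n : nat) : graph :=
  @Graph ('I_2 + 'I_n)%type (fun x y =>
    match x, y with
    | inl _, inr _ => true
    | inr i, inr j => i != j
    | _, _ => false
    end).

(* CK_n : two copies of K_n plus a perfect matching between them. *)
Definition CK (n : nat) : graph :=
  @Graph (bool * 'I_n)%type (fun x y =>
    ((x.1 == y.1) && (x.2 != y.2)) || ((x.1 != y.1) && (x.2 == y.2))).

Definition six_family (n : nat) : gfamily :=
  fun H => H = Kstar n \/ H = nP3 n \/ H = K1nstar n \/ H = K2n n \/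
           H = E2joinKn n \/ H = CK n.

(* A vertex [v] has [alpha(G[N(v)]) >= 2] exactly when it is the centre of an induced path
   [x - v - y].  Each of the six graphs with parameter [n + 2] has [n + 2] such vertices, so a
   bound on their number in [H]-free graphs forces every member of the six family to contain a
   graph of [H].  Conversely, colour each pair of such paths by the [3 x 3] table recording, for
   every pair of positions, whether the two vertices are equal, adjacent or non-adjacent.
   Ramsey's theorem turns many such vertices into a long sequence of paths with a constant
   table, and a finite check over all tables compatible with homogeneity shows that such a
   sequence always contains [K_n^*], [nP_3], [K_{1,n}^*], [K_{2,n}], [E_2 + K_n] or [CK_n] as
   an induced subgraph. *)

From mathcomp Require Import all_boot zify.
From Stdlib Require Import Classical_Prop.
Set Implicit Arguments. Unset Strict Implicit. Unset Printing Implicit Defensive.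

(** * Ramsey's theorem for sequences *)

Lemma sum_count_preim (C : finType) (T : Type) (g : T -> C) (s : seq T) :
  \sum_(c : C) count (fun y => g y == c) s = size s.
Proof.
elim: s => [|x s IHs] /=; first by rewrite big1.
rewrite big_split /= IHs (bigD1 (g x)) //= eqxx big1 ?addn0 ?add1n // => c.
by rewrite eq_sym => /negPf ->.
Qed.

Lemma pigeonhole_count (C : finType) (T : Type) (g : T -> C) (s : seq T) m :
  #|C| * m < size s -> exists c, m < count (fun y => g y == c) s.
Proof.
move=> lt_s; apply/existsP; apply: contraTT lt_s => /existsPn small.
rewrite -leqNgt -(sum_count_preim g) -sum_nat_const.
by apply: leq_sum => c _; rewrite leqNgt small.
Qed.

Lemma greedy_chain (T : eqType) (C : finType) (col : T -> T -> C) m (s : seq T) :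
  (#|C|.+2) ^ m <= size s ->
  exists u : seq (T * C), [/\ subseq (map fst u) s, size u = m &
    pairwise (fun a b => col a.1 b.1 == a.2) u].
Proof.
elim: m s => [|m IHm] [|x s] big_s; try by exists [::]; rewrite sub0seq.
  by rewrite leqn0 expn_eq0 in big_s.
have [|c lt_c] := @pigeonhole_count C _ (col x) s ((#|C|.+2) ^ m).-1.
  move: big_s; rewrite /= expnS; have := expn_gt0 #|C|.+2 m; nia.
have [|u [sub_u size_u chain_u]] := IHm [seq y <- s | col x y == c].
  by rewrite size_filter; move: lt_c; case: (_ ^ _).
exists ((x, c) :: u); split => //=; first by rewrite eqxx (subseq_trans sub_u) ?filter_subseq.
- by rewrite size_u.
- rewrite chain_u andbT; apply/allP => y /(map_f fst) /(mem_subseq sub_u).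
  by rewrite mem_filter => /andP [].
Qed.

Lemma ramsey_subseq (T : eqType) (C : finType) (col : T -> T -> C) N (s : seq T) :
  0 < #|C| -> (#|C|.+2) ^ (#|C| * N) <= size s ->
  exists c w, [/\ subseq w s, N <= size w & pairwise (fun x y => col x y == c) w].
Proof.
move=> C_gt0 big_s; have [u [sub_u size_u chain_u]] := greedy_chain col big_s.
have [N0 | N_gt0] := posnP N.
  by have /card_gt0P [c _] := C_gt0; exists c, [::]; rewrite sub0seq N0.
have [|c lt_c] := @pigeonhole_count C _ snd u N.-1; first by rewrite size_u; nia.
exists c, (map fst [seq a <- u | a.2 == c]); split.
- exact: subseq_trans (map_subseq _ (filter_subseq _ _)) sub_u.
- by rewrite size_map size_filter; move: lt_c; case: (N) N_gt0.
- rewrite pairwise_map; apply: (sub_in_pairwise _ (filter_all _ u) (pairwise_filter _ chain_u)).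
  by move=> a b /eqP <-.
Qed.

(** * Non-simplicial vertices *)

Lemma adj_irr (G : graph) (x : V G) : adj x x = false.
Proof. by rewrite /adj eqxx. Qed.

Lemma adj_sym (G : graph) (x y : V G) : adj x y = adj y x.
Proof. by rewrite /adj eq_sym orbC. Qed.

Lemma induced_trans H1 H2 H3 : induced H1 H2 -> induced H2 H3 -> induced H1 H3.
Proof.
move=> [f [f_inj f_adj]] [g [g_inj g_adj]]; exists (g \o f).
by split=> [|x y /=]; [exact: inj_comp | rewrite g_adj f_adj].
Qed.

Definition nonsimplicial (G : graph) : {set V G} :=
  [set v : V G | 2 <= alpha_on (nbhd v)].

Definition cherry (G : graph) (v : V G) (xy : V G * V G) : bool :=
  [&& xy.1 != xy.2, adj v xy.1, adj v xy.2 & ~~ adj xy.1 xy.2].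

Lemma nonsimplicialP (G : graph) (v : V G) :
  reflect (exists xy, cherry v xy) (v \in nonsimplicial G).
Proof.
rewrite inE /alpha_on; apply: (iffP idP) => [|[[x y] /and4P [/= xy vx vy xy']]].
  move=> big; apply/existsP; apply: contraTT big => /existsPn no_cherry.
  rewrite -ltnNge ltnS; apply/bigmax_leqP => A /andP [/subsetP sub_A /forall_inP indA].
  rewrite leqNgt; apply/card_gt1P => -[x [y [Ax Ay xy]]].
  have:= no_cherry (x, y); rewrite /cherry /= xy.
  have:= sub_A x Ax; have:= sub_A y Ay; rewrite !inE => -> ->.
  by have /forall_inP -> := indA x Ax.
have <- : #|[set x; y]| = 2 by rewrite cards2 xy.
apply: (leq_bigmax_cond [set x; y]); apply/andP; split.
  by apply/subsetP => z; rewrite !inE => /orP [] /eqP ->.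
apply/forall_inP => a; rewrite !inE => Ha; apply/forall_inP => b; rewrite !inE => Hb.
by case/orP: Ha => /eqP ->; case/orP: Hb => /eqP ->; rewrite ?adj_irr // adj_sym.
Qed.

Lemma leq_card_ord_inj (T : finType) (A : {set T}) n (f : 'I_n -> T) :
  injective f -> (forall i, f i \in A) -> n <= #|A|.
Proof.
move=> f_inj fA; rewrite -[n]card_ord -(card_imset _ f_inj).
by apply/subset_leq_card/subsetP => _ /imsetP [i _ ->].
Qed.

Lemma inl_eq (A B : eqType) (a a' : A) : (@inl A B a == inl a') = (a == a').
Proof. by []. Qed.

Lemma inr_eq (A B : eqType) (b b' : B) : (@inr A B b == inr b') = (b == b').
Proof. by []. Qed.

Lemma some_eq (A : eqType) (a a' : A) : (Some a == Some a') = (a == a').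
Proof. by []. Qed.

Lemma six_family_nonsimplicial n H : six_family n.+2 H -> n.+2 <= #|nonsimplicial H|.
Proof.
pose o (i : 'I_n.+2) : 'I_n.+2 := lift i ord0.
have nonsimplicial_of (G : graph) (v x y : V G) :
  x != y -> adj v x -> adj v y -> ~~ adj x y -> v \in nonsimplicial G.
  by move=> *; apply/nonsimplicialP; exists (x, y); apply/and4P.
case=> [->|[->|[->|[->|[->|->]]]]].
- apply: (@leq_card_ord_inj _ _ _ inl) => [i j [] //|i].
  apply: (@nonsimplicial_of (Kstar n.+2) _ (inr i) (inl (o i)));
    rewrite /adj /= ?eqxx ?inl_eq ?neq_lift //.
  by rewrite eq_sym neq_lift.
- apply: (@leq_card_ord_inj _ _ _ (fun i => (i, @Ordinal 3 1 isT))) => [i j [] //|i].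
  apply: (@nonsimplicial_of (nP3 n.+2) _ (i, @Ordinal 3 0 isT) (i, @Ordinal 3 2 isT));
  by rewrite /adj /= ?xpair_eqE ?eqxx.
- apply: (@leq_card_ord_inj _ _ _ (fun i => Some (inl i))) => [i j [] //|i].
  by apply: (@nonsimplicial_of (K1nstar n.+2) _ None (Some (inr i))); rewrite /adj /= ?eqxx.
- apply: (@leq_card_ord_inj _ _ _ inr) => [i j [] //|i].
  by apply: (@nonsimplicial_of (K2n n.+2) _ (inl (@Ordinal 2 0 isT)) (inl (@Ordinal 2 1 isT))).
- apply: (@leq_card_ord_inj _ _ _ inr) => [i j [] //|i].
  by apply: (@nonsimplicial_of (E2joinKn n.+2) _ (inl (@Ordinal 2 0 isT)) (inl (@Ordinal 2 1 isT))).
- apply: (@leq_card_ord_inj _ _ _ (pair false)) => [i j [] //|i].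
  apply: (@nonsimplicial_of (CK n.+2) _ (true, i) (false, o i));
    rewrite /adj /= ?xpair_eqE ?eqxx ?neq_lift //=.
  by rewrite negb_or [o i == i]eq_sym neq_lift.
Qed.

(** * Homogeneous sequences of induced paths *)

Definition link (G : graph) (x y : V G) : nat :=
  if x == y then 0 else if adj x y then 1 else 2.

Lemma link_eq0 (G : graph) (x y : V G) : (link x y == 0) = (x == y).
Proof. by rewrite /link; case: (x =P y) => //; case: adj. Qed.

Lemma link_sym (G : graph) (x y : V G) : link x y = link y x.
Proof. by rewrite /link eq_sym adj_sym. Qed.

Lemma link_lt3 (G : graph) (x y : V G) : link x y < 3.
Proof. by rewrite /link; case: eqP => //; case: adj. Qed.

Definition p3link (p q : nat) : nat :=
  if p == q then 0 else if (p == 1) || (q == 1) then 1 else 2.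

Lemma p3link_sym p q : p3link p q = p3link q p.
Proof. by rewrite /p3link eq_sym orbC. Qed.

Lemma p3linkxx p : p3link p p = 0.
Proof. by rewrite /p3link eqxx. Qed.

(* Positions 0, 1, 2 of [p3_at v] run along a fixed induced path [x - v - y]; all positions
   are [v] when there is no such path. *)
Definition p3_at (G : graph) (v : V G) (p : nat) : V G :=
  if [pick xy | cherry v xy] is Some xy then
    if p == 0 then xy.1 else if p == 1 then v else xy.2
  else v.

Lemma p3_at_centre (G : graph) (v : V G) : p3_at v 1 = v.
Proof. by rewrite /p3_at; case: pickP. Qed.

Lemma link_p3_at (G : graph) (v : V G) p q : v \in nonsimplicial G -> p < 3 -> q < 3 ->
  link (p3_at v p) (p3_at v q) = p3link p q.
Proof.
move=> /nonsimplicialP ex_cherry p_lt3 q_lt3; rewrite /p3_at.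
case: pickP => [[x y]|no_cherry]; last first.
  by case: ex_cherry => xy; rewrite no_cherry.
move=> /and4P [/= xy vx vy xy'].
have vxE : link v x = 1 by rewrite /link vx; case: eqP => // vxE; rewrite vxE adj_irr in vx.
have vyE : link v y = 1 by rewrite /link vy; case: eqP => // vyE; rewrite vyE adj_irr in vy.
have xyE : link x y = 2 by rewrite /link (negPf xy) (negPf xy').
have xxE z : link z z = 0 by rewrite /link eqxx.
by case: p p_lt3 => [|[|[|]]] //; case: q q_lt3 => [|[|[|]]] //= _ _; rewrite ?xxE // link_sym.
Qed.

(* [tlink c k l p q] predicts [link (T k p) (T l q)] along a sequence [T] of induced
   P3's whose colouring is the table [c]: [c p q] is read from an earlier triple to a later one. *)
Definition tlink (c : nat -> nat -> nat) (k l p q : nat) : nat :=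
  if k < l then c p q else if k == l then p3link p q else c q p.

Definition homog (G : graph) (T : nat -> nat -> V G) c N :=
  forall k l p q, k < N -> l < N -> p < 3 -> q < 3 -> link (T k p) (T l q) = tlink c k l p q.

Lemma homog_ext (G : graph) (T : nat -> nat -> V G) c c' N :
  (forall p q, p < 3 -> q < 3 -> c p q = c' p q) -> homog T c N -> homog T c' N.
Proof.
move=> cc' homT k l p q k_lt l_lt p_lt q_lt; rewrite homT // /tlink.
by case: ifP => _; [rewrite cc'|case: ifP => _ //; rewrite cc'].
Qed.

Lemma homog_induced (G : graph) (T : nat -> nat -> V G) c N (H : graph)
    (idx pos : V H -> nat) :
  homog T c N -> (forall x, idx x < N) -> (forall x, pos x < 3) ->
  (forall x y, (tlink c (idx x) (idx y) (pos x) (pos y) == 1) = adj x y) ->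
  (forall x y, tlink c (idx x) (idx y) (pos x) (pos y) = 0 -> x = y) ->
  induced H G.
Proof.
move=> homT idx_lt pos_lt tlink_adj tlink_eq; exists (fun x => T (idx x) (pos x)); split.
  by move=> x y Txy; apply: tlink_eq; rewrite -homT // /link Txy eqxx.
move=> x y; rewrite -tlink_adj -homT // /link.
by case: (T _ _ =P T _ _) => [->|_]; [rewrite adj_irr | case: adj].
Qed.

Lemma tlink_sym c k l p q : tlink c k l p q = tlink c l k q p.
Proof. by rewrite /tlink; case: (ltngtP k l) => //; rewrite p3link_sym. Qed.

Lemma tlink_order c k l k' l' p q : (k < l) = (k' < l') -> (k == l) = (k' == l') ->
  tlink c k l p q = tlink c k' l' p q.
Proof. by rewrite /tlink => -> ->. Qed.

Lemma tlink_shift c k l m p q : tlink c (k + m) (l + m) p q = tlink c k l p q.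
Proof. by rewrite /tlink ltn_add2r eqn_add2r. Qed.

(* Patterns take their block from the triples [2, ..., n+1] of a homogeneous sequence of
   length [n + 4]; an extra vertex comes from one of the outer triples [0, 1, n+2, n+3],
   and only its side of the block matters, which [outer_rank] records relative to rank 2. *)
Definition outer_idx (n s : nat) : nat := if s < 2 then s else n + s.
Definition outer_rank (s : nat) : nat := if s < 2 then s else s.+1.

Lemma outer_idx_lt n s : s < 4 -> outer_idx n s < n + 4.
Proof. by rewrite /outer_idx; case: ifP; lia. Qed.

Lemma tlink_outer_block c n s k p q : s < 4 -> k < n ->
  tlink c (outer_idx n s) (k + 2) p q = tlink c (outer_rank s) 2 p q.
Proof.
move=> s_lt k_lt; apply: tlink_order; rewrite /outer_idx /outer_rank;
by case: s s_lt => [|[|[|[|s]]]] //= _; apply/idP/idP; lia.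
Qed.

Lemma tlink_outer c n s t p q : s < 4 -> t < 4 ->
  tlink c (outer_idx n s) (outer_idx n t) p q = tlink c (outer_rank s) (outer_rank t) p q.
Proof.
move=> s_lt t_lt; apply: tlink_order; rewrite /outer_idx /outer_rank;
case: s s_lt => [|[|[|[|s]]]] //= _; case: t t_lt => [|[|[|[|t]]]] //= _; apply/idP/idP; lia.
Qed.

Lemma ord_ltF n (i j : 'I_n) : i < j -> (i == j) = false.
Proof. by move=> lt_ij; rewrite -val_eqE /= ltn_eqF. Qed.

Lemma ord_gtF n (i j : 'I_n) : i < j -> (j == i) = false.
Proof. by move=> lt_ij; rewrite eq_sym ord_ltF. Qed.

Ltac ord_cases i j :=
  case: (ltngtP i j) => [||/val_inj ?];
  [ let h := fresh in move=> h; rewrite ?(ord_ltF h) ?(ord_gtF h)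
  | let h := fresh in move=> h; rewrite ?(ord_ltF h) ?(ord_gtF h)
  | subst ].

Definition I3 := iota 0 3.
Definition I4 := iota 0 4.

Lemma mem_I3 p : (p \in I3) = (p < 3).
Proof. by rewrite mem_iota. Qed.

Lemma mem_I4 s : (s \in I4) = (s < 4).
Proof. by rewrite mem_iota. Qed.

(** * The six patterns *)

(* A pattern picks positions in the block triples, and possibly in outer triples, and
   checks the table entries that make them induce the named graph. *)
Definition Kstar_pattern (c : nat -> nat -> nat) p q :=
  [&& c p p == 1, c q q == 2, p3link p q == 1, c p q == 2 & c q p == 2].

Definition CK_pattern (c : nat -> nat -> nat) p q :=
  [&& c p p == 1, c q q == 1, p3link p q == 1, c p q == 2 & c q p == 2].

Definition K1nstar_pattern (c : nat -> nat -> nat) s p0 p q :=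
  [&& tlink c (outer_rank s) 2 p0 p == 1, tlink c (outer_rank s) 2 p0 q == 2,
      c p p == 2, c q q == 2, p3link p q == 1, c p q == 2 & c q p == 2].

Definition two_apex_pattern (c : nat -> nat -> nat) s p0 t p1 q (b : bool) :=
  [&& tlink c (outer_rank s) (outer_rank t) p0 p1 == 2, tlink c (outer_rank s) 2 p0 q == 1,
      tlink c (outer_rank t) 2 p1 q == 1 & c q q == (if b then 1 else 2)].

Definition nP3_pattern (c : nat -> nat -> nat) :=
  all (fun p => all (fun q => c p q == 2) I3) I3.

Definition two_apex (b : bool) (n : nat) : graph :=
  @Graph ('I_2 + 'I_n)%type (fun x y =>
    match x, y with
    | inl _, inr _ => true
    | inr i, inr j => b && (i != j)
    | _, _ => false
    end).

Lemma two_apex_K2n n : induced (K2n n) (two_apex false n).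
Proof. by exists id; split=> // [[i|i] [j|j]]; rewrite /adj /= ?andbF. Qed.

Lemma two_apex_E2joinKn n : induced (E2joinKn n) (two_apex true n).
Proof. by exists id; split=> // [[i|i] [j|j]]. Qed.

Section Patterns.

Variables (G : graph) (T : nat -> nat -> V G) (c : nat -> nat -> nat) (n : nat).
Hypothesis homT : homog T c (n + 4).

Lemma Kstar_pattern_induced p q : p < 3 -> q < 3 -> Kstar_pattern c p q -> induced (Kstar n) G.
Proof.
move=> p_lt q_lt /and5P [/eqP cpp /eqP cqq /eqP pq /eqP cpq /eqP cqp].
have qp : p3link q p = 1 by rewrite p3link_sym.
have tab := (cpp, cqq, pq, qp, cpq, cqp).
apply: (@homog_induced G T c (n + 4) (Kstar n)
  (fun x : 'I_n + 'I_n => match x with inl i | inr i => i + 2 end)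
  (fun x : 'I_n + 'I_n => match x with inl _ => p | inr _ => q end) homT).
- by case=> i /=; have := ltn_ord i; lia.
- by case.
- case=> i [] j /=; rewrite tlink_shift /adj /= ?inl_eq ?inr_eq /tlink;
  ord_cases i j; rewrite ?ltnn ?eqxx ?p3linkxx ?tab //=.
- case=> i [] j /=; rewrite tlink_shift /tlink;
  ord_cases i j; rewrite ?ltnn ?eqxx ?p3linkxx ?tab //=.
Qed.

Lemma CK_pattern_induced p q : p < 3 -> q < 3 -> CK_pattern c p q -> induced (CK n) G.
Proof.
move=> p_lt q_lt /and5P [/eqP cpp /eqP cqq /eqP pq /eqP cpq /eqP cqp].
have qp : p3link q p = 1 by rewrite p3link_sym.
have tab := (cpp, cqq, pq, qp, cpq, cqp).
apply: (@homog_induced G T c (n + 4) (CK n)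
  (fun x : bool * 'I_n => x.2 + 2) (fun x : bool * 'I_n => if x.1 then q else p) homT).
- by case=> b i /=; have := ltn_ord i; lia.
- by case=> [[]].
- case=> b i [] b' j /=; rewrite tlink_shift /adj /= ?xpair_eqE /tlink;
  ord_cases i j; case: b; case: b'; rewrite ?ltnn ?eqxx ?p3linkxx ?tab //=.
- case=> b i [] b' j /=; rewrite tlink_shift /tlink;
  ord_cases i j; case: b; case: b'; rewrite ?ltnn ?eqxx ?p3linkxx ?tab //=.
Qed.

Lemma K1nstar_pattern_induced s p0 p q : s < 4 -> p0 < 3 -> p < 3 -> q < 3 ->
  K1nstar_pattern c s p0 p q -> induced (K1nstar n) G.
Proof.
move=> s_lt p0_lt p_lt q_lt.
move=> /and5P [/eqP sp /eqP sq /eqP cpp /eqP cqq /and3P [/eqP pq /eqP cpq /eqP cqp]].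
have qp : p3link q p = 1 by rewrite p3link_sym.
have tab := (cpp, cqq, pq, qp, cpq, cqp).
have sp' k : k < n -> tlink c (outer_idx n s) (k + 2) p0 p = 1.
  by move=> k_lt; rewrite tlink_outer_block.
have sq' k : k < n -> tlink c (outer_idx n s) (k + 2) p0 q = 2.
  by move=> k_lt; rewrite tlink_outer_block.
have ps' k : k < n -> tlink c (k + 2) (outer_idx n s) p p0 = 1 by rewrite tlink_sym; apply: sp'.
have qs' k : k < n -> tlink c (k + 2) (outer_idx n s) q p0 = 2 by rewrite tlink_sym; apply: sq'.
apply: (@homog_induced G T c (n + 4) (K1nstar n)
  (fun x : option ('I_n + 'I_n) =>
     match x with None => outer_idx n s | Some (inl i) | Some (inr i) => i + 2 end)
  (fun x : option ('I_n + 'I_n) =>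
     match x with None => p0 | Some (inl _) => p | Some (inr _) => q end) homT).
- by case=> [[] i|] /=; [have := ltn_ord i; lia|have := ltn_ord i; lia|exact: outer_idx_lt].
- by case=> [[]|].
- case=> [[] i|] [[] j|] /=; rewrite /adj /= ?some_eq ?inl_eq ?inr_eq ?tlink_shift ?p3linkxx;
  rewrite ?sp' ?sq' ?ps' ?qs' //; rewrite /tlink ?ltnn ?eqxx ?p3linkxx //;
  ord_cases i j; rewrite ?ltnn ?eqxx ?p3linkxx ?tab //=.
- case=> [[] i|] [[] j|] /=; rewrite ?tlink_shift ?sp' ?sq' ?ps' ?qs' //;
  rewrite /tlink ?ltnn ?eqxx ?p3linkxx //;
  ord_cases i j; rewrite ?ltnn ?eqxx ?p3linkxx ?tab //=.
Qed.

Lemma two_apex_pattern_induced s p0 t p1 q b :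
  s < 4 -> p0 < 3 -> t < 4 -> p1 < 3 -> q < 3 ->
  two_apex_pattern c s p0 t p1 q b -> induced (two_apex b n) G.
Proof.
move=> s_lt p0_lt t_lt p1_lt q_lt /and4P [/eqP st /eqP sq /eqP tq /eqP cqq].
have sq' k : k < n -> tlink c (outer_idx n s) (k + 2) p0 q = 1.
  by move=> k_lt; rewrite tlink_outer_block.
have tq' k : k < n -> tlink c (outer_idx n t) (k + 2) p1 q = 1.
  by move=> k_lt; rewrite tlink_outer_block.
have qs' k : k < n -> tlink c (k + 2) (outer_idx n s) q p0 = 1 by rewrite tlink_sym; apply: sq'.
have qt' k : k < n -> tlink c (k + 2) (outer_idx n t) q p1 = 1 by rewrite tlink_sym; apply: tq'.
have st' : tlink c (outer_idx n s) (outer_idx n t) p0 p1 = 2 by rewrite tlink_outer.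
have ts' : tlink c (outer_idx n t) (outer_idx n s) p1 p0 = 2 by rewrite tlink_sym st'.
have ss' u r : tlink c (outer_idx n u) (outer_idx n u) r r = 0.
  by rewrite /tlink ltnn eqxx p3linkxx.
have tab := (sq', tq', qs', qt', st', ts', ss').
apply: (@homog_induced G T c (n + 4) (two_apex b n)
  (fun x : 'I_2 + 'I_n =>
     match x with inl i => outer_idx n (if val i == 0 then s else t) | inr i => i + 2 end)
  (fun x : 'I_2 + 'I_n =>
     match x with inl i => if val i == 0 then p0 else p1 | inr _ => q end) homT).
- by case=> i /=; [case: ifP => _; exact: outer_idx_lt|have := ltn_ord i; lia].
- by case=> [i|i] //=; case: ifP.
- case=> [[[|[|//]] Hi]|i] [[[|[|//]] Hj]|j] /=; rewrite /adj /= ?inl_eq ?inr_eq ?tlink_shift;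
  rewrite ?tab //; rewrite /tlink ?ltnn ?eqxx ?p3linkxx //;
  ord_cases i j; rewrite ?ltnn ?eqxx ?p3linkxx ?cqq //=; by case: b cqq.
- case=> [[[|[|//]] Hi]|i] [[[|[|//]] Hj]|j] /=; rewrite ?tlink_shift;
  rewrite ?tab //; try by move=> _; congr inl; apply: val_inj.
  rewrite /tlink; ord_cases i j; rewrite ?ltnn ?eqxx ?p3linkxx ?cqq //=; by case: b cqq.
Qed.

Lemma nP3_pattern_induced : nP3_pattern c -> induced (nP3 n) G.
Proof.
move=> nP3c; have c2 p q : p < 3 -> q < 3 -> c p q = 2.
  move=> p_lt q_lt; apply/eqP; move/allP: nP3c => /(_ p); rewrite mem_I3 => /(_ p_lt).
  by move/allP => /(_ q); rewrite mem_I3; apply.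
apply: (@homog_induced G T c (n + 4) (nP3 n)
  (fun x : 'I_n * 'I_3 => x.1 + 2) (fun x : 'I_n * 'I_3 => val x.2) homT).
- by case=> i r /=; have := ltn_ord i; lia.
- by case=> i r /=.
- case=> i r [] j r' /=; rewrite tlink_shift /adj /= ?xpair_eqE /tlink;
  ord_cases i j; rewrite ?ltnn ?eqxx ?c2 ?andbF //=.
  by case: r => [[|[|[|//]]] Hr]; case: r' => [[|[|[|//]]] Hr'].
- case=> i r [] j r' /=; rewrite tlink_shift /tlink;
  ord_cases i j; rewrite ?ltnn ?eqxx ?c2 //=.
  by case: r => [[|[|[|//]]] ?]; case: r' => [[|[|[|//]]] ?] // _; congr pair; apply: val_inj.
Qed.

End Patterns.

(** * Tables of homogeneous sequences *)

(* [c p q = 0] forces positions [p] and [q] of all the triples to be one common vertex. *)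
Definition admissible (c : nat -> nat -> nat) :=
  [&& c 1 1 != 0,
      all (fun p => all (fun q => (c p q == 0) ==> (c p p == 0) && (c q q == 0)) I3) I3 &
      all (fun p => (c p p == 0) ==>
        all (fun y => (c p y == p3link p y) && (c y p == p3link y p)) I3) I3].

Definition covered (c : nat -> nat -> nat) :=
  [|| has (fun p => has (fun q => Kstar_pattern c p q || CK_pattern c p q) I3) I3,
      has (fun s => has (fun p0 => has (fun p => has (fun q =>
        K1nstar_pattern c s p0 p q) I3) I3) I3) I4,
      has (fun s => has (fun p0 => has (fun t => has (fun p1 => has (fun q =>
        two_apex_pattern c s p0 t p1 q false || two_apex_pattern c s p0 t p1 q true)
        I3) I3) I4) I3) I4
    | nP3_pattern c].

Definition table9 (a b c d e f g h i : nat) (p q : nat) : nat :=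
  nth 0 (nth [::] [:: [:: a; b; c]; [:: d; e; f]; [:: g; h; i]] p) q.

Definition table (c : nat -> nat -> nat) : nat -> nat -> nat :=
  table9 (c 0 0) (c 0 1) (c 0 2) (c 1 0) (c 1 1) (c 1 2) (c 2 0) (c 2 1) (c 2 2).

Lemma tableE c p q : p < 3 -> q < 3 -> table c p q = c p q.
Proof. by case: p => [|[|[|]]] //; case: q => [|[|[|]]]. Qed.

(* Written with [if] rather than [==>] so that [vm_compute] evaluates [covered] lazily. *)
Lemma admissible_table9_covered :
  all (fun a => all (fun b => all (fun c => all (fun d => all (fun e =>
  all (fun f => all (fun g => all (fun h => all (fun i =>
    if admissible (table9 a b c d e f g h i) then covered (table9 a b c d e f g h i) else true)
  I3) I3) I3) I3) I3) I3) I3) I3) I3.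
Proof. by vm_compute. Qed.

Lemma admissible_covered c : (forall p q, c p q < 3) ->
  admissible (table c) -> covered (table c).
Proof.
move=> c_lt; have cI3 p q : c p q \in I3 by rewrite mem_I3.
move: admissible_table9_covered.
move=> /allP /(_ _ (cI3 0 0)) /allP /(_ _ (cI3 0 1)) /allP /(_ _ (cI3 0 2)).
move=> /allP /(_ _ (cI3 1 0)) /allP /(_ _ (cI3 1 1)) /allP /(_ _ (cI3 1 2)).
move=> /allP /(_ _ (cI3 2 0)) /allP /(_ _ (cI3 2 1)) /allP /(_ _ (cI3 2 2)).
by move=> + adm; rewrite adm.
Qed.

Lemma homog_admissible (G : graph) (T : nat -> nat -> V G) c N :
  homog T c N -> 2 < N -> T 0 1 != T 1 1 -> admissible c.
Proof.
move=> homT N_gt2 centres.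
have E k l p q : k < l < N -> p < 3 -> q < 3 -> link (T k p) (T l q) = c p q.
  by move=> /andP [kl lN] p_lt q_lt; rewrite homT ?(ltn_trans kl) // /tlink kl.
have EE k l p q : k < l < N -> p < 3 -> q < 3 -> c p q = 0 -> T k p = T l q.
  by move=> kl p_lt q_lt c0; apply/eqP; rewrite -link_eq0 E // c0.
have N_gt1 : 1 < N := ltnW N_gt2.
have N_gt0 : 0 < N := ltnW N_gt1.
have A01 : 0 < 1 < N by rewrite N_gt1.
have A02 : 0 < 2 < N by rewrite N_gt2.
have A12 : 1 < 2 < N by rewrite N_gt2.
have linkxx (x : V G) : link x x = 0 by rewrite /link eqxx.
apply/and3P; split.
- by rewrite -(E 0 1 1 1 A01) // link_eq0.
- apply/allP => p; rewrite mem_I3 => p_lt; apply/allP => q; rewrite mem_I3 => q_lt.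
  apply/implyP => /eqP c0; apply/andP; split; apply/eqP.
  + by rewrite -(E 0 1 p p A01) // (EE 0 2 p q) // (EE 1 2 p q).
  + by rewrite -(E 1 2 q q A12) // -(EE 0 1 p q) // -(EE 0 2 p q).
- apply/allP => p; rewrite mem_I3 => p_lt; apply/implyP => /eqP c0.
  have T01 := EE 0 1 p p A01 p_lt p_lt c0.
  apply/allP => y; rewrite mem_I3 => y_lt; apply/andP; split; apply/eqP.
  + by rewrite -(E 0 1 p y A01) // T01 homT.
  + by rewrite -(E 0 1 y p A01) // -T01 homT.
Qed.

Lemma covered_induced (G : graph) (T : nat -> nat -> V G) c n :
  homog T c (n + 4) -> covered c -> exists2 H, six_family n H & induced H G.
Proof.
move=> homT; case/or4P.
- move=> /hasP [p]; rewrite mem_I3 => p_lt /hasP [q]; rewrite mem_I3 => q_lt /orP [] pat.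
  + exists (Kstar n); first by left.
    exact: (Kstar_pattern_induced homT p_lt q_lt pat).
  + exists (CK n); first by do 5 right.
    exact: (CK_pattern_induced homT p_lt q_lt pat).
- move=> /hasP [s]; rewrite mem_I4 => s_lt /hasP [p0]; rewrite mem_I3 => p0_lt.
  move=> /hasP [p]; rewrite mem_I3 => p_lt /hasP [q]; rewrite mem_I3 => q_lt pat.
  exists (K1nstar n); first by do 2 right; left.
  exact: (K1nstar_pattern_induced homT s_lt p0_lt p_lt q_lt pat).
- move=> /hasP [s]; rewrite mem_I4 => s_lt /hasP [p0]; rewrite mem_I3 => p0_lt.
  move=> /hasP [t]; rewrite mem_I4 => t_lt /hasP [p1]; rewrite mem_I3 => p1_lt.
  move=> /hasP [q]; rewrite mem_I3 => q_lt /orP [] pat.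
  + have := two_apex_pattern_induced homT s_lt p0_lt t_lt p1_lt q_lt pat.
    exists (K2n n); first by do 3 right; left.
    exact: induced_trans (two_apex_K2n n) _.
  + have := two_apex_pattern_induced homT s_lt p0_lt t_lt p1_lt q_lt pat.
    exists (E2joinKn n); first by do 4 right; left.
    exact: induced_trans (two_apex_E2joinKn n) _.
- exists (nP3 n); first by right; left.
  exact: (nP3_pattern_induced homT).
Qed.

Definition ramsey_bound (N : nat) : nat :=
  let K := #|{ffun 'I_3 * 'I_3 -> 'I_3}| in K.+2 ^ (K * N).

Lemma homogeneous_p3s (G : graph) N : 1 < N -> ramsey_bound N <= #|nonsimplicial G| ->
  exists (T : nat -> nat -> V G) c, [/\ homog T c N, forall p q, c p q < 3 & T 0 1 != T 1 1].
Proof.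
move=> N_gt1 big.
have [x0 _] : exists x0, x0 \in nonsimplicial G.
  by apply/card_gt0P; apply: leq_trans big; rewrite expn_gt0.
pose col (x y : V G) : {ffun 'I_3 * 'I_3 -> 'I_3} :=
  [ffun pq : 'I_3 * 'I_3 => inord (link (p3_at x pq.1) (p3_at y pq.2))].
have [||cf [w [sub_w size_w hom_w]]] := @ramsey_subseq _ _ col N (enum (nonsimplicial G)).
- by apply/card_gt0P; exists [ffun=> ord0].
- by rewrite -cardE.
have w_ns k : k < size w -> nth x0 w k \in nonsimplicial G.
  by move=> k_lt; rewrite -mem_enum (mem_subseq sub_w) ?mem_nth.
have uniq_w : uniq w by rewrite (subseq_uniq sub_w) ?enum_uniq.
pose T k p := p3_at (nth x0 w k) p; pose c p q := val (cf (inord p, inord q)).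
have T_lt k l p q : k < l -> l < size w -> p < 3 -> q < 3 -> link (T k p) (T l q) = c p q.
  move=> kl l_lt p_lt q_lt; move/(pairwiseP x0): hom_w => /(_ k l).
  rewrite !inE (ltn_trans kl l_lt) l_lt /c => /(_ isT isT kl) /eqP <-.
  by rewrite ffunE /= !inordK // link_lt3.
exists T, c; split=> [k l p q k_lt l_lt p_lt q_lt | p q | ].
- have [k_lt' l_lt'] := (leq_trans k_lt size_w, leq_trans l_lt size_w).
  rewrite /tlink; case: ltngtP => [kl | lk | <-]; first exact: T_lt.
    by rewrite link_sym T_lt.
  exact: (link_p3_at (w_ns _ k_lt') p_lt q_lt).
- exact: ltn_ord.
- have w_gt1 := leq_trans N_gt1 size_w.
  by rewrite /T !p3_at_centre nth_uniq // ltnW.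
Qed.

Lemma six_family_induced (G : graph) n : ramsey_bound (n + 4) <= #|nonsimplicial G| ->
  exists2 H, six_family n H & induced H G.
Proof.
move=> big; have [T [c [homT c_lt centres]]] := homogeneous_p3s (ltn_addl n (isT : 1 < 4)) big.
have homT' : homog T (table c) (n + 4) by apply: homog_ext homT => p q p_lt q_lt; rewrite tableE.
have adm := homog_admissible homT' (ltn_addl n (isT : 2 < 4)) centres.
exact: (covered_induced homT' (admissible_covered c_lt adm)).
Qed.

Theorem corollary1p9 (F : gfamily) :
  (exists c : nat, forall G : graph, Hfree F G ->
      #|[set v : V G | 2 <= alpha_on (nbhd v)]| < c)
  <->
  (exists n : nat, 0 < n /\ fam_le F (six_family n)).
Proof.
split=> [[c bounded] | [n [_ F_le]]].
- exists c.+2; split=> // H sixH; apply: NNPP => no_sub.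
  have F_free : Hfree F H by move=> H1 FH1 subH1; apply: no_sub; exists H1.
  have small : #|nonsimplicial H| < c := bounded H F_free.
  by have := six_family_nonsimplicial sixH; lia.
- exists (ramsey_bound (n + 4)) => G F_free; rewrite ltnNge; apply/negP => big.
  have [H sixH subH] := six_family_induced big.
  have [H1 FH1 subH1] := F_le H sixH.
  exact: F_free H1 FH1 (induced_trans subH1 subH).
Qed.
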